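(* Given a positive integer $n$, there exists a constant $\delta_n>0$ depending only on $n$ such that for any integer $d\ge2$, any $0\ne a\in\mathbb{Z}/d\mathbb{Z}$, and any subgroup $H\subset G=(\mathbb{Z}/d\mathbb{Z})^\times$ of index $\le n$, $$\frac{1}{|H|}\sum_{t\in H}\left\langle\frac{ta}{d}\right\rangle>\delta_n.$$
   Context: For a real number $x$, $\langle x\rangle$ denotes its fractional part: $0\le\langle x\rangle<1$ and $x-\langle x\rangle\in\mathbb{Z}$. For $ta\in\mathbb{Z}/d\mathbb{Z}$, $\langle ta/d\rangle$ is computed using any integer representative. *)

From HB Require Import structures.
From mathcomp Require Import all_boot all_order all_algebra all_fingroup.
Set Implicit Arguments. Unset Strict Implicit. Unset Printing Implicit Defensive.
Import Order.TTheory GRing.Theory Num.Theory.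
Local Open Scope ring_scope.

Definition fracZ (d : nat) (x : 'Z_d) : rat := (nat_of_ord x)%:R / d%:R.

From HB Require Import structures.
From mathcomp Require Import all_boot all_order all_algebra all_fingroup.
From mathcomp Require Import zify.

(* Write a = g b and d = g e with g = gcd(a, d); then <ta/d> = (tb mod e)/e, so
   it suffices to bound the average over H of the residues tb mod e from below.
   If every prime-power factor of e is below 4n, then e <= (4n)^(4n) while each
   residue is at least 1.  Otherwise let q = p^k be the exact power of a prime p
   dividing e with q >= 4n, and e = m q.  Let U_m be the units congruent to 1
   mod m.  The units 1 + j w m (j < q, w the p'-part of d) that are prime to p
   lie in U_m and in distinct cosets of U_e, so |U_m| >= (q/2) |U_e|, and
   K = H /\ U_m, of index at most n in U_m, has |K| >= q |U_e| / (2n).  For a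
   fixed t, all residues tkb mod e with k in K are congruent to tb mod m, and
   each value is taken by at most |U_e| elements k, so at least half of them
   are >= m floor(q/4n) >= e/(8n). *)

Set Implicit Arguments.
Unset Strict Implicit.
Unset Printing Implicit Defensive.

Import Order.TTheory GRing.Theory Num.Theory.

Lemma eqn_modM2r c e x y :
  coprime c e -> (x * c == y * c %[mod e]) = (x == y %[mod e]).
Proof.
move=> ce; apply/idP/idP => [|/eqP xy]; last by rewrite -modnMml xy modnMml.
wlog le_yx : x y / y <= x => [W|].
  case: (leqP y x) => [yx|/ltnW xy]; first exact: W.
  by rewrite eq_sym => /W; rewrite eq_sym; apply.
rewrite !eqn_mod_dvd ?leq_mul2r ?le_yx ?orbT // -mulnBl.
by rewrite Gauss_dvdl // coprime_sym.
Qed.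

Lemma card_dvdn_affine p q c :
  0 < p -> p %| q -> coprime c p -> #|[set j : 'I_q | p %| 1 + j * c]| <= q %/ p.
Proof.
move=> p0 pq cp; set A := [set j : 'I_q | _].
have modA : {in A &, forall i j : 'I_q, i = j %[mod p]}.
  move=> i j; rewrite !inE => pi pj; apply/eqP.
  rewrite -(eqn_modM2r _ _ cp) -(eqn_modDl 1).
  by move: pi pj; rewrite /dvdn => /eqP-> /eqP->.
have div_inj : {in A &, injective (fun j : 'I_q => j %/ p)}.
  move=> i j iA jA eq_div; apply: val_inj.
  by rewrite /= (divn_eq i p) (divn_eq j p) eq_div (modA _ _ iA jA).
rewrite cardE -(size_map (fun j : 'I_q => j %/ p)) -(size_iota 0 (q %/ p)).
apply: uniq_leq_size => [|_ /mapP[j _ ->]].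
  rewrite map_inj_in_uniq ?enum_uniq // => i j.
  by rewrite !mem_enum; apply: div_inj.
by rewrite mem_iota add0n ltn_divLR // divnK //; apply: ltn_ord.
Qed.

Lemma card_le_index_mul_setI {gT : finGroupType} n (H K : {group gT}) :
  #|[set: gT] : H|%g <= n -> #|K| <= n * #|H :&: K|.
Proof.
move=> le_iH_n; rewrite -(leq_pmul2l (cardG_gt0 H)) mulnCA mul_cardG.
rewrite mulnA; apply: leq_mul => //.
apply: leq_trans (_ : #|[set: gT]%G| <= _); first exact/subset_leq_card/subsetT.
by rewrite -(Lagrange (subsetT H)) mulnC leq_mul.
Qed.

Lemma card_le_fibers {gT : finGroupType} {T : eqType} (U : {group gT})
    (f : gT -> T) (s : seq T) (A : {set gT}) :
  {in A &, forall x y, f x = f y -> (x^-1 * y)%g \in U} ->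
  {in A, forall x, f x \in s} -> #|A| <= size s * #|U|.
Proof.
elim: s A => [|y s IHs] A fU fAs.
  by rewrite leqn0 cards_eq0; apply/eqP/setP => x; rewrite inE; apply/idP => /fAs.
rewrite -(setID A [set x | f x == y]) mulSn.
apply: leq_trans (leq_card_setU _ _) _; apply: leq_add; last first.
  apply: IHs => [x z /setDP[xA _] /setDP[zA _]|x]; first exact: fU.
  by rewrite !inE => /andP[ne_fx_y /fAs]; rewrite inE (negbTE ne_fx_y).
have [-> | [x0 /setIP[x0A]]] := set_0Vmem (A :&: [set x | f x == y]).
  by rewrite cards0.
rewrite inE => /eqP fx0; rewrite -(card_lcoset U x0) subset_leq_card //.
apply/subsetP => x /setIP[xA]; rewrite inE => /eqP fx.
by rewrite mem_lcoset fU // fx fx0.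
Qed.

Lemma sum_mulg_subgroup {gT : finGroupType} (H K : {group gT}) (F : gT -> nat) :
  K \subset H ->
  \sum_(t in H) \sum_(k in K) F (t * k)%g = #|K| * \sum_(t in H) F t.
Proof.
move=> sKH; rewrite exchange_big -sum_nat_const /=.
apply: eq_bigr => k kK; rewrite [RHS](reindex_inj (mulIg k)) /=.
by apply: eq_bigl => t; rewrite groupMr // (subsetP sKH).
Qed.

Lemma mul_card_le_sum_ltn {T : finType} (A : {pred T}) (f : T -> nat) x :
  x * #|A| <= \sum_(i in A) f i + x * #|[set i in A | f i < x]|.
Proof.
have -> : #|[set i in A | f i < x]| = \sum_(i in A) (f i < x).
  rewrite -sum1_card big_mkcond [RHS]big_mkcond /=; apply: eq_bigr => i _.
  by rewrite inE; case: (i \in A).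
rewrite mulnC -sum_nat_const big_distrr -big_split /=; apply: leq_sum => i _.
by case: ltnP; rewrite ?muln1 ?muln0 ?addn0 // leq_addl.
Qed.

Lemma leq_pfactor_bound e N :
  0 < e -> 0 < N -> {in primes e, forall p, p ^ logn p e < N} -> e <= N ^ N.
Proof.
move=> e0 N0 small.
have le_p_pe p : p \in primes e -> p <= p ^ logn p e.
  move=> pe; have pp : prime p by move: pe; rewrite mem_primes => /and3P[].
  by rewrite -{1}(expn1 p); apply: leq_pexp2l; [exact: prime_gt0 | rewrite logn_gt0].
rewrite [X in X <= _](prod_prime_decomp e0) prime_decompE big_map /=.
apply: (@leq_trans (\prod_(p <- primes e) N)).
  by rewrite !big_seq; apply: leq_prod => p /small/ltnW.
rewrite big_const_seq count_predT iter_muln muln1.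
apply: leq_pexp2l N0 _; rewrite -(size_iota 0 N).
apply: uniq_leq_size (primes_uniq e) _ => p pe.
by rewrite mem_iota add0n (leq_ltn_trans (le_p_pe p pe)) ?small.
Qed.

Section UnitsModD.

Variable D' : nat.
Local Notation D := D'.+2.

Definition nat_of_unit (t : {unit 'Z_D}) : nat := nat_of_ord (val t).

Definition ker_mod (m : nat) : {set {unit 'Z_D}} :=
  [set k | nat_of_unit k == 1 %[mod m]].

Lemma nat_of_unit1 : nat_of_unit 1%g = 1.
Proof. by rewrite /nat_of_unit /= modn_small. Qed.

Lemma nat_of_unitM_mod m (t k : {unit 'Z_D}) : m %| D ->
  nat_of_unit (t * k)%g = nat_of_unit t * nat_of_unit k %[mod m].
Proof. by move=> mD; rewrite /nat_of_unit /= modn_dvdm. Qed.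

Lemma coprime_nat_of_unit (t : {unit 'Z_D}) : coprime D (nat_of_unit t).
Proof. by have := valP t; rewrite -[val t]natr_Zp unitZpE // natr_Zp. Qed.

Lemma coprime_nat_of_unitM e b (t : {unit 'Z_D}) :
  e %| D -> coprime b e -> coprime (nat_of_unit t * b) e.
Proof.
move=> eD be; rewrite coprimeMl be andbT coprime_sym.
exact: coprime_dvdl eD (coprime_nat_of_unit t).
Qed.

Lemma group_set_ker_mod m : m %| D -> group_set (ker_mod m).
Proof.
move=> mD; apply/group_setP; split=> [|x y]; first by rewrite inE nat_of_unit1.
rewrite !inE => /eqP x1 /eqP y1.
by rewrite (nat_of_unitM_mod _ _ mD) -modnMm x1 y1 modnMm.
Qed.

Lemma mulg_ker_mod e c (x y : {unit 'Z_D}) : e %| D -> coprime c e ->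
  nat_of_unit x * c = nat_of_unit y * c %[mod e] -> (x^-1 * y)%g \in ker_mod e.
Proof.
move=> eD ce /eqP; rewrite eqn_modM2r // => /eqP xy; rewrite inE.
rewrite (nat_of_unitM_mod _ _ eD) -modnMmr -xy modnMmr -(nat_of_unitM_mod _ _ eD).
by rewrite mulVg nat_of_unit1.
Qed.

Lemma card_ker_mod_affine m q w :
  m * q %| D -> coprime w q ->
  #|[set j : 'I_q | coprime D (1 + j * (w * m))]| * #|ker_mod (m * q)|
    <= #|ker_mod m|.
Proof.
move=> mqD wq.
have m0 : 0 < m by case: m mqD => // /dvdnP[? /eqP]; rewrite mul0n.
set Good := [set j : 'I_q | _].
pose u (j : 'I_q) : {unit 'Z_D} :=
  insubd (1%g : {unit 'Z_D}) ((1 + j * (w * m))%:R : 'Z_D)%R.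
have u_val j : j \in Good -> nat_of_unit (u j) = (1 + j * (w * m)) %% D.
  by rewrite inE => cop; rewrite /nat_of_unit val_insubd unitZpE // cop val_Zp_nat.
have u_mod e j :
    j \in Good -> e %| D -> nat_of_unit (u j) = 1 + j * (w * m) %[mod e].
  by move=> jG eD; rewrite u_val // modn_dvdm.
have mD : m %| D by apply: dvdn_trans mqD; apply: dvdn_mulr.
rewrite -cardsX -(@card_in_imset _ _ (fun jl => u jl.1 * jl.2)%g).
  apply/subset_leq_card/subsetP => y /imsetP[[j l] /setXP[jG]].
  rewrite !inE => /eqP l1 ->.
  have l1m : nat_of_unit l = 1 %[mod m].
    by rewrite -(modn_dvdm _ (dvdn_mulr q (dvdnn m))) l1 modn_dvdm ?dvdn_mulr.
  rewrite (nat_of_unitM_mod _ _ mD) -modnMmr l1m modnMmr muln1 u_mod //.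
  by rewrite mulnA addnC modnMDl.
move=> [j1 l1] [j2 l2] /setXP[j1G]; rewrite inE => /eqP l1_1.
move=> /setXP[j2G]; rewrite inE => /eqP l2_1 /= eq_ul.
have j12 : j1 = j2.
  have := congr1 (fun x => nat_of_unit x %% (m * q)) eq_ul => /=.
  rewrite !(nat_of_unitM_mod _ _ mqD) -modnMmr l1_1 modnMmr.
  rewrite -[in RHS]modnMmr l2_1 modnMmr !muln1 !u_mod // => /eqP.
  rewrite eqn_modDl !mulnA (mulnC m q) -!muln_modl eqn_pmul2r //.
  by rewrite eqn_modM2r // !modn_small // => /eqP j12; apply: val_inj.
by move: eq_ul; rewrite j12 => /mulgI ->.
Qed.

Lemma card_ker_mod_pfactor p i m :
  prime p -> 0 < i -> coprime p m -> m * p ^ i %| D ->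
  p ^ i * #|ker_mod (m * p ^ i)| <= 2 * #|ker_mod m|.
Proof.
move=> pp i0 pm mqD; set q := p ^ i in mqD *.
have [w pw Dw] := pfactor_coprime pp (ltn0Sn D'.+1).
have pq : p %| q by rewrite /q -(prednK i0) expnS dvdn_mulr.
set Good := [set j : 'I_q | coprime D (1 + j * (w * m))].
have notGood_dvd : ~: Good \subset [set j : 'I_q | p %| 1 + j * (w * m)].
  apply/subsetP => j; rewrite !inE; apply: contraR => npj.
  have cp : coprime p (1 + j * (w * m)) by rewrite prime_coprime.
  by rewrite Dw coprimeMl coprimeXl // andbT /coprime mulnCA mulnC addnC gcdnMDl gcdn1.
have Good_large : q <= 2 * #|Good|.
  have wm_p : coprime (w * m) p by rewrite coprimeMl !(coprime_sym _ p) pw pm.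
  have := card_dvdn_affine (prime_gt0 pp) pq wm_p.
  move/(leq_trans (subset_leq_card notGood_dvd)).
  have := cardsC Good; rewrite card_ord.
  have : q %/ p * 2 <= q by rewrite -{2}(divnK pq) leq_mul2l prime_gt1 ?orbT.
  lia.
apply: leq_trans (_ : 2 * #|Good| * #|ker_mod (m * q)| <= _).
  by rewrite leq_mul2r Good_large orbT.
by rewrite -mulnA leq_mul2l card_ker_mod_affine ?orbT // coprimeXr // coprime_sym.
Qed.

Lemma sum_mod_ker_mod_ge n m q c (K : {group {unit 'Z_D}}) :
  0 < n -> 0 < m -> m * q %| D -> coprime c (m * q) -> K \subset ker_mod m ->
  4 * n <= q -> 2 * (q %/ (4 * n)) * #|ker_mod (m * q)| <= #|K| ->
  m * q * #|K| <= 16 * n * \sum_(k in K) (nat_of_unit k * c %% (m * q)).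
Proof.
move=> n0 m0 mqD ce sKm le_4n_q large_K.
set e := m * q in mqD ce large_K *; set J := q %/ (4 * n).
pose r k := nat_of_unit k * c %% e.
have r_mod k : k \in K -> r k = c %[mod m].
  move/(subsetP sKm); rewrite inE => /eqP k1.
  by rewrite /r modn_dvdm ?dvdn_mulr // -modnMml k1 modnMml mul1n.
set S := [set k in K | r k < J * m].
have card_S : #|S| <= J * #|ker_mod e|.
  rewrite -(size_iota 0 J).
  apply: (card_le_fibers (U := Group (group_set_ker_mod mqD))
                         (f := fun k => r k %/ m)).
    move=> x y /setIdP[xK _] /setIdP[yK _] eq_div; apply: mulg_ker_mod ce _ => //.
    by rewrite -/(r x) -/(r y) (divn_eq (r x) m) (divn_eq (r y) m) eq_div !r_mod.
  by move=> k /setIdP[_]; rewrite mem_iota ltn_divLR.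
have := mul_card_le_sum_ltn (K : {set _}) r (J * m); rewrite -/S.
move: card_S large_K; rewrite -/J.
set E := #|ker_mod e|; set s := \sum_(i in K) r i => card_S large_K markov.
have half_sum : J * m * #|K| <= 2 * s.
  have S_half : #|S| * 2 <= #|K|.
    by apply: leq_trans large_K; rewrite mulnC -mulnA leq_mul2l card_S orbT.
  have := leq_mul (leqnn (J * m)) S_half; move: markov; nia.
have J0 : 0 < J by rewrite divn_gt0 // muln_gt0.
have q_le : q <= 8 * n * J.
  have : q < J.+1 * (4 * n) by rewrite ltn_ceil // muln_gt0.
  have := leq_mul (leqnn (4 * n)) J0; lia.
rewrite /e; nia.
Qed.

Lemma sum_mod_large_pfactor n e b p (H : {group {unit 'Z_D}}) :
  0 < n -> e %| D -> coprime b e -> #|[set: {unit 'Z_D}] : H|%g <= n ->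
  prime p -> 4 * n <= p ^ logn p e ->
  e * #|H| <= 16 * n * \sum_(t in H) (nat_of_unit t * b %% e).
Proof.
move=> n0 eD be le_iH_n pp le_4n_q.
have e0 : 0 < e := dvdn_gt0 (ltn0Sn _) eD.
have [m pm em] := pfactor_coprime pp e0; set q := p ^ logn p e in le_4n_q em.
have m0 : 0 < m by move: e0; rewrite em muln_gt0 => /andP[].
have i0 : 0 < logn p e by move: le_4n_q; rewrite /q; case: (logn p e) => //; lia.
have mD : m %| D by apply: dvdn_trans eD; rewrite em dvdn_mulr.
set K := (H :&: Group (group_set_ker_mod mD))%G.
have card_K : q * #|ker_mod e| <= 2 * n * #|K|.
  rewrite em -mulnA; apply: leq_trans (card_ker_mod_pfactor pp i0 pm _) _.
    by rewrite -em.
  by rewrite leq_mul2l; apply/orP; right; apply: card_le_index_mul_setI.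
have sum_K t : t \in H ->
    e * #|K| <= 16 * n * \sum_(k in K) (nat_of_unit (t * k)%g * b %% e).
  move=> _; under eq_bigr => k _ do
    rewrite -modnMml (nat_of_unitM_mod _ _ eD) modnMml mulnAC mulnC.
  rewrite em; apply: sum_mod_ker_mod_ge => //; first by rewrite -em.
  - by rewrite -em coprime_nat_of_unitM.
  - exact: subsetIr.
  - rewrite -em; move: card_K; have : q %/ (4 * n) * (4 * n) <= q := leq_trunc_div _ _.
    nia.
rewrite -(leq_pmul2l (cardG_gt0 K)) [X in _ <= X]mulnCA.
rewrite -sum_mulg_subgroup ?subsetIl // big_distrr.
apply: leq_trans (_ : \sum_(t in H) e * #|K| <= _); last exact: leq_sum.
by rewrite sum_nat_const; nia.
Qed.

Lemma sum_mod_units_ge n e b (H : {group {unit 'Z_D}}) :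
  0 < n -> e %| D -> 1 < e -> coprime b e -> #|[set: {unit 'Z_D}] : H|%g <= n ->
  e * #|H| <= maxn (16 * n) ((4 * n) ^ (4 * n)) *
                \sum_(t in H) (nat_of_unit t * b %% e).
Proof.
move=> n0 eD e1 be le_iH_n.
have [/hasP[p pe le_4n_q] | /hasPn small_pf] :=
  boolP (has (fun p => 4 * n <= p ^ logn p e) (primes e)).
  have pp : prime p by move: pe; rewrite mem_primes => /andP[].
  apply: leq_trans (sum_mod_large_pfactor n0 eD be le_iH_n pp le_4n_q) _.
  by rewrite leq_mul2r leq_maxl orbT.
have e_small : e <= (4 * n) ^ (4 * n).
  apply: leq_pfactor_bound (ltnW e1) _ _; first by rewrite muln_gt0.
  by move=> p /small_pf; rewrite -ltnNge.
have terms_pos : #|H| <= \sum_(t in H) (nat_of_unit t * b %% e).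
  rewrite -sum1_card; apply: leq_sum => t _; rewrite lt0n.
  apply: contraTneq (coprime_nat_of_unitM t eD be) => r0.
  by rewrite -coprime_modl r0 /coprime gcd0n gtn_eqF.
apply: leq_trans (leq_mul e_small terms_pos) _.
by rewrite leq_mul2r leq_maxr orbT.
Qed.

Lemma fracZ_mul_reduced (a : 'Z_D) : a != 0%R ->
  exists e b, [/\ e %| D, 1 < e, coprime b e &
    forall x : 'Z_D, fracZ (x * a)%R = ((x * b %% e)%:R / e%:R)%R].
Proof.
move=> a0; set A := nat_of_ord a; set g := gcdn A D.
have A0 : 0 < A by rewrite lt0n; apply: contra a0 => /eqP A0; apply/eqP/val_inj.
have g0 : 0 < g by rewrite gcdn_gt0 A0.
have De : D = D %/ g * g by rewrite divnK ?dvdn_gcdr.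
have Ab : A = A %/ g * g by rewrite divnK ?dvdn_gcdl.
exists (D %/ g), (A %/ g); split => [||| x].
- by rewrite {2}De dvdn_mulr.
- rewrite ltn_divRL ?dvdn_gcdr // mul1n.
  exact: leq_ltn_trans (dvdn_leq A0 (dvdn_gcdl A D)) (ltn_ord a).
- by rewrite /coprime -(eqn_pmul2r g0) mul1n muln_gcdl -Ab -De.
rewrite /fracZ /= (_ : _ %% _ = x * (A %/ g) %% (D %/ g) * g)%N.
  have -> : (D%:R = (D %/ g)%:R * g%:R :> rat)%R by rewrite -natrM -De.
  by rewrite natrM -mulf_div divff ?mulr1 // pnatr_eq0 -lt0n.
by rewrite muln_modl -mulnA -Ab -De.
Qed.

End UnitsModD.

Local Open Scope ring_scope.

Theorem corollary2p7 (n : nat) : (0 < n)%N ->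
  exists delta : rat, 0 < delta /\
    forall (d : nat) (a : 'Z_d) (H : {group {unit 'Z_d}}),
      (2 <= d)%N -> a != 0 ->
      (#|[set: {unit 'Z_d}] : H|%g <= n)%N ->
      delta < (#|H|%:R)^-1 * \sum_(t in H) fracZ (val t * a).
Proof.
move=> n0; set C := maxn (16 * n) ((4 * n) ^ (4 * n)).
have C0 : (0 < C)%N by rewrite leq_max muln_gt0 n0.
exists (C.*2%:R)^-1; split=> [|[|[|d]] // a H _ a0 le_iH_n].
  by rewrite invr_gt0 ltr0n double_gt0.
have [e [b [eD e1 be fracZE]]] := fracZ_mul_reduced a0.
have := sum_mod_units_ge n0 eD e1 be le_iH_n; rewrite -/C /nat_of_unit => le_eH_CS.
under eq_bigr => t _ do rewrite fracZE.
rewrite -mulr_suml -natr_sum; move: le_eH_CS.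
set S := (\sum_(t in H) _)%N => le_eH_CS.
rewrite mulrCA -invfM -natrM ltr_pdivlMr ?ltr0n ?muln_gt0 ?cardG_gt0 ?(ltnW e1) //.
rewrite mulrC ltr_pdivrMr ?ltr0n ?double_gt0 // -natrM ltr_nat.
have := cardG_gt0 H; nia.
Qed.
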